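(* For real $0\le x<1$, $$ \begin{aligned} \mathcal C_2\left(\tfrac x2\right)&=\left(2\cos\tfrac{\pi x}{2}\right)^{\frac x2}\exp\left(\frac1{2\pi}\sum_{n=1}^\infty \frac{(-1)^n\sin(\pi nx)}{n^{2}}\right), \\ \mathcal C_3\left(\tfrac x2\right)&=\left(2\cos\tfrac{\pi x}{2}\right)^{(\frac x2)^2}\exp\biggl(\frac1{2\pi^2}\sum_{n=1}^\infty \frac{(-1)^n\cos(\pi nx)}{n^{3}} +\frac x{2\pi}\sum_{n=1}^\infty \frac{(-1)^n\sin(\pi nx)}{n^{2}}+\frac1{2\pi^2}\zeta_E(3)\biggr),\\ \mathcal C_4\left(\tfrac x2\right)&=\left(2\cos\tfrac{\pi x}{2}\right)^{(\frac x2)^3}\exp\biggl(\frac{3x}{4\pi^2}\sum_{n=1}^\infty \frac{(-1)^n\cos(\pi nx)}{n^{3}} -\frac 3{4\pi^3}\sum_{n=1}^\infty \frac{(-1)^n\sin(\pi nx)}{n^{4}}+\frac{3x^2}{8\pi}\sum_{n=1}^\infty \frac{(-1)^n\sin(\pi nx)}{n^{2}}\biggr), \\ \mathcal C_5\left(\tfrac x2\right)&=\left(2\cos\tfrac{\pi x}{2}\right)^{(\frac x2)^4}\exp\biggl(-\frac{3}{2\pi^4}\sum_{n=1}^\infty \frac{(-1)^n\cos(\pi nx)}{n^{5}} +\frac{3x^2}{4\pi^2}\sum_{n=1}^\infty \frac{(-1)^n\cos(\pi nx)}{n^{3}}-\frac{3x}{2\pi^3}\sum_{n=1}^\infty \frac{(-1)^n\sin(\pi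 nx)}{n^{4}} \\ &\qquad+\frac{x^3}{4\pi}\sum_{n=1}^\infty \frac{(-1)^n\sin(\pi nx)}{n^{2}}-\frac3{2\pi^4}\zeta_E(5) \biggr). \end{aligned} $$
   Context: For an integer $r\ge2$ let $P_r(y)=(1-y)\exp\left(y+\frac{y^2}{2}+\cdots+\frac{y^r}{r}\right)$. For real $|x|<\tfrac12$, the Kurokawa–Koyama multiple cosine function of order $r$ is the convergent positive product $\mathcal C_r(x)=\prod_{n\ge1,\ n\text{ odd}}\left\{P_r\left(\frac{x}{n/2}\right)P_r\left(-\frac{x}{n/2}\right)^{(-1)^{r-1}}\right\}^{(n/2)^{r-1}}$. $\zeta_E(s)=\sum_{n=1}^\infty\frac{(-1)^{n+1}}{n^s}$. *)

From Stdlib Require Import Reals.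
From Coquelicot Require Import Coquelicot.
Open Scope R_scope.

Definition Pr (r : nat) (y : R) : R :=
  (1 - y) * exp (sum_f_R0 (fun k => y ^ (k + 1) / INR (k + 1)) (r - 1)).

Definition mcos_factor (r : nat) (x : R) (m : nat) : R :=
  let h := INR m / 2 in
  Rpower (Pr r (x / h) * Rpower (Pr r (- (x / h))) ((-1) ^ (r - 1)))
         (h ^ (r - 1)).

Fixpoint mcos_partial (r : nat) (x : R) (N : nat) : R :=
  match N with
  | O => 1
  | S N' => mcos_partial r x N' * mcos_factor r x (2 * N' + 1)
  end.

(* The Kurokawa--Koyama multiple cosine C_r(x) as the limit of its partial
   products (the product converges for |x| < 1/2). *)
Definition mcos (r : nat) (x : R) : Rbar := Lim_seq (mcos_partial r x).

Definition Ssin (k : nat) (x : R) : R :=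
  Series (fun m => (-1) ^ (m + 1) * sin (PI * INR (m + 1) * x) / INR (m + 1) ^ k).

Definition Scos (k : nat) (x : R) : R :=
  Series (fun m => (-1) ^ (m + 1) * cos (PI * INR (m + 1) * x) / INR (m + 1) ^ k).

Definition zetaE (s : nat) : R :=
  Series (fun m => (-1) ^ m / INR (m + 1) ^ s).

From Stdlib Require Import Reals Lra Lia.
From Coquelicot Require Import Coquelicot.
Open Scope R_scope.

(** Taking logarithms turns [C_r (y)] into a series [log_mcos r y] whose
    [n]-th term has derivative [- y^(r-1) * 2 y / ((n/2)^2 - y^2)]; by the
    partial fraction expansion of the tangent (obtained from that of the
    cotangent, proved by Herglotz's trick) the derivative of [log_mcos r] is
    [- y^(r-1) PI tan (PI y)].  The claimed logarithms have the same derivative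
    in [x = 2 y]: [Ssin 2] has derivative [- PI ln (2 cos (PI x / 2))] (by Abel
    summation of [sum (-1)^n r^n cos (n t) / n = - ln (1 + 2 r cos t + r^2) / 2])
    and the higher [Ssin], [Scos] differentiate termwise into one another.
    Both sides vanish at [0], so they agree. *)

Lemma is_series_sum_f_R0 (a : nat -> R) (l : R) :
  is_series a l <-> is_lim_seq (fun N => sum_f_R0 a N) l.
Proof. rewrite is_series_Reals, is_lim_seq_Reals. reflexivity. Qed.

Lemma is_lim_seq_Series (a : nat -> R) :
  ex_series a -> is_lim_seq (fun N => sum_f_R0 a N) (Series a).
Proof. intro Ha. apply is_series_sum_f_R0, Series_correct, Ha. Qed.

Lemma is_lim_seq_opp' (u : nat -> R) (l : R) :
  is_lim_seq u l -> is_lim_seq (fun n => - u n) (- l).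
Proof. exact (proj1 (is_lim_seq_opp u l)). Qed.

Lemma is_lim_seq_scal_l' (u : nat -> R) (c l : R) :
  is_lim_seq u l -> is_lim_seq (fun n => c * u n) (c * l).
Proof. exact (is_lim_seq_scal_l u c l). Qed.

Lemma is_lim_seq_uniq (u : nat -> R) (l1 l2 : R) :
  is_lim_seq u l1 -> is_lim_seq u l2 -> l1 = l2.
Proof.
  intros H1 H2. apply is_lim_seq_unique in H1, H2.
  rewrite H1 in H2. now injection H2.
Qed.

Lemma Series_null (a : nat -> R) : (forall n, a n = 0) -> Series a = 0.
Proof.
  intro H. rewrite (Series_ext a (fun n => 0 * a n)) by (intro n; rewrite H; ring).
  rewrite Series_scal_l. ring.
Qed.

Lemma ex_series_Rabs_le (a b : nat -> R) :
  (forall n, Rabs (a n) <= b n) -> ex_series b -> ex_series a.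
Proof. intros Hab Hb. now apply (ex_series_le (V := R_CompleteNormedModule) a b). Qed.

Lemma is_lim_seq_inv_INR_plus (c : R) : is_lim_seq (fun N => / (INR N + c)) 0.
Proof.
  replace (Finite 0) with (Rbar_inv p_infty) by reflexivity.
  apply is_lim_seq_inv; [|discriminate].
  eapply is_lim_seq_plus; [apply is_lim_seq_INR | apply is_lim_seq_const | reflexivity].
Qed.

Lemma ex_series_inv_succ_sqr : ex_series (fun n => / (INR n + 1) ^ 2).
Proof.
  set (b := fun n => 2 * (/ (INR n + 1) - / (INR n + 2))).
  (* the majorant [b] telescopes *)
  assert (Hb : forall N, sum_f_R0 b N = 2 * (1 - / (INR N + 2))).
  { induction N as [|N IH]; simpl sum_f_R0.
    - unfold b; simpl; field.
    - rewrite IH. unfold b. rewrite S_INR. field. pose proof (pos_INR N); split; lra. }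
  apply (ex_series_Rabs_le _ b).
  - intro n. unfold b. pose proof (pos_INR n).
    replace (2 * (/ (INR n + 1) - / (INR n + 2)))
      with (/ ((INR n + 1) * (INR n + 2) / 2)) by (field; lra).
    rewrite Rabs_pos_eq by (apply Rlt_le, Rinv_0_lt_compat; nra).
    apply Rinv_le_contravar; nra.
  - exists 2. apply is_series_sum_f_R0.
    apply is_lim_seq_ext with (fun N => 2 * (1 - / (INR N + 2))); [intro; now rewrite Hb|].
    assert (L := is_lim_seq_scal_l' _ 2 _ (is_lim_seq_minus' _ _ 1 0
                   (is_lim_seq_const 1) (is_lim_seq_inv_INR_plus 2))).
    now replace (2 * (1 - 0)) with 2 in L by ring.
Qed.

Lemma ex_series_scal_inv_succ_sqr (c : R) : ex_series (fun n => c * / (INR n + 1) ^ 2).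
Proof. exact (ex_series_scal_l c _ ex_series_inv_succ_sqr). Qed.

Lemma Rabs_Series_le (a b : nat -> R) :
  (forall n, Rabs (a n) <= b n) -> ex_series b -> Rabs (Series a) <= Series b.
Proof.
  intros Hab Hb.
  assert (Ha : ex_series (fun n => Rabs (a n))).
  { apply (ex_series_Rabs_le _ b); auto. intro n. now rewrite Rabs_Rabsolu. }
  eapply Rle_trans; [now apply Series_Rabs|].
  apply Series_le; auto. intro n; split; auto using Rabs_pos.
Qed.

Lemma CVU_Series (u : nat -> R -> R) (M : nat -> R) c (r : posreal) :
  (forall n y, Boule c r y -> Rabs (u n y) <= M n) -> ex_series M ->
  CVU (fun n y => sum_f_R0 (fun k => u k y) n) (fun y => Series (fun k => u k y)) c r.
Proof.
  intros HM HMs eps Heps.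
  destruct (proj1 (is_lim_seq_Reals _ _) (is_lim_seq_Series M HMs) eps Heps) as [N HN].
  exists N. intros n y Hn Hy.
  assert (Hu : ex_series (fun k => u k y)) by (apply (ex_series_Rabs_le _ M); auto).
  assert (tail : forall a, ex_series a ->
            Series a - sum_f_R0 a n = Series (fun k => a (S n + k)%nat)).
  { intros a Ha. rewrite (Series_incr_n a (S n)) by (lia || auto). simpl pred. ring. }
  rewrite tail by auto.
  eapply Rle_lt_trans.
  { apply (Rabs_Series_le _ (fun k => M (S n + k)%nat)); [intro k; apply HM; auto|].
    now apply (ex_series_incr_n M (S n)). }
  rewrite <- tail by auto.
  specialize (HN n Hn). unfold Rdist in HN. rewrite Rabs_minus_sym in HN.
  eapply Rle_lt_trans; [apply Rle_abs | exact HN].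
Qed.

Lemma derivable_pt_lim_sum_f_R0 (u u' : nat -> R -> R) y :
  (forall n, derivable_pt_lim (u n) y (u' n y)) ->
  forall N, derivable_pt_lim (fun y => sum_f_R0 (fun k => u k y) N) y
                             (sum_f_R0 (fun k => u' k y) N).
Proof.
  intros H N; induction N as [|N IH]; simpl; [apply H|].
  now apply (derivable_pt_lim_plus (fun y => sum_f_R0 (fun k => u k y) N) (u (S N))).
Qed.

Lemma derivable_pt_lim_Series (u u' : nat -> R -> R) (M : nat -> R) c (r : posreal) :
  (forall n y, Boule c r y -> derivable_pt_lim (u n) y (u' n y)) ->
  (forall n y, Boule c r y -> Rabs (u' n y) <= M n) -> ex_series M ->
  (forall y, Boule c r y -> ex_series (fun n => u n y)) ->
  forall y, Boule c r y ->
  derivable_pt_lim (fun y => Series (fun n => u n y)) y (Series (fun n => u' n y)).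
Proof.
  intros Hd HM HMs Hex.
  apply (CVU_derivable (fun n y => sum_f_R0 (fun k => u k y) n)
                       (fun n y => sum_f_R0 (fun k => u' k y) n)); auto.
  - now apply (CVU_Series u' M).
  - intros x Hx. apply is_lim_seq_Reals, is_lim_seq_Series; auto.
  - intros n x Hx. apply derivable_pt_lim_sum_f_R0. auto.
Qed.

Lemma Boule_0 (r : posreal) y : Boule 0 r y <-> Rabs y < r.
Proof. unfold Boule. now rewrite Rminus_0_r. Qed.

Lemma continuity_pt_ex_derive (f : R -> R) x : ex_derive f x -> continuity_pt f x.
Proof. intro H. apply continuity_pt_filterlim, (ex_derive_continuous f x H). Qed.

Lemma null_derivative_eq (D : R -> R) a b : a <= b ->
  (forall z, a < z < b -> derivable_pt_lim D z 0) ->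
  (forall z, a <= z <= b -> continuity_pt D z) -> D b = D a.
Proof.
  intros Hab Hd Hc.
  assert (pr : forall x, a < x < b -> derivable_pt D x) by (intros x Hx; exists 0; exact (Hd x Hx)).
  apply (null_derivative_loc D a b pr Hc); [|lra].
  intros x P. apply derive_pt_eq_0. now apply Hd.
Qed.

Lemma Rabs_div_le a b c d : Rabs a <= c -> 0 < d <= Rabs b -> Rabs (a / b) <= c / d.
Proof.
  intros Ha [Hd Hb]. unfold Rdiv. rewrite Rabs_mult, Rabs_inv.
  apply Rmult_le_compat; auto using Rabs_pos.
  - apply Rlt_le, Rinv_0_lt_compat; lra.
  - now apply Rinv_le_contravar.
Qed.

Lemma Rabs_m1_pow m : Rabs ((-1) ^ m) = 1.
Proof. rewrite <- RPow_abs, Rabs_m1. apply pow1. Qed.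

Lemma INR_add1 m : INR (m + 1) = INR m + 1.
Proof. rewrite plus_INR; simpl; ring. Qed.

Lemma PI_bounds : 3 < PI <= 4.
Proof. split; [pose proof PI2_3_2; lra | apply PI_4]. Qed.

(** * Partial fractions of the cotangent *)

Definition cot_pf_term (x : R) (n : nat) : R := 2 * x / (x ^ 2 - INR (S n) ^ 2).

Fixpoint cot_partial (N : nat) (x : R) : R :=
  match N with O => 1 / x | S n => cot_partial n x + cot_pf_term x n end.

Definition cot_pf (x : R) : R := 1 / x + Series (cot_pf_term x).

Definition pi_cot (x : R) : R := PI * cos (PI * x) / sin (PI * x).

Lemma cot_pf_term_bound r x n : 0 <= r < 1 -> Rabs x <= r ->
  Rabs (cot_pf_term x n) <= 2 / (1 - r ^ 2) * / (INR n + 1) ^ 2.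
Proof.
  intros Hr Hx. unfold cot_pf_term. rewrite S_INR. pose proof (pos_INR n).
  assert (Hx2 : x ^ 2 <= r ^ 2) by (rewrite <- pow2_abs; apply pow_incr; split; auto using Rabs_pos).
  replace (2 / (1 - r ^ 2) * / (INR n + 1) ^ 2)
    with (2 / ((1 - r ^ 2) * (INR n + 1) ^ 2)) by (field; nra).
  apply Rabs_div_le.
  - rewrite Rabs_mult, Rabs_pos_eq by lra. lra.
  - assert (Hn : 1 <= (INR n + 1) ^ 2) by nra.
    assert (Hr2 : r ^ 2 < 1) by nra.
    rewrite Rabs_left by nra. split; [nra|].
    assert (0 <= r ^ 2 * ((INR n + 1) ^ 2 - 1)) by (apply Rmult_le_pos; nra). nra.
Qed.

Lemma ex_series_cot_pf_term x : Rabs x < 1 -> ex_series (cot_pf_term x).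
Proof.
  intro Hx. apply (ex_series_Rabs_le _ _ (fun n => cot_pf_term_bound (Rabs x) x n
                    (conj (Rabs_pos x) Hx) (Rle_refl _))).
  apply ex_series_scal_inv_succ_sqr.
Qed.

Lemma continuity_pt_Series_cot_pf_term c : Rabs c < 1 ->
  continuity_pt (fun x => Series (cot_pf_term x)) c.
Proof.
  intro Hc. set (r := (Rabs c + 1) / 2).
  assert (Hr : 0 < r < 1) by (unfold r; pose proof (Rabs_pos c); lra).
  apply (CVU_continuity (fun N x => sum_f_R0 (fun n => cot_pf_term x n) N) _ 0 (mkposreal r (proj1 Hr))).
  - apply (CVU_Series (fun n x => cot_pf_term x n) (fun n => 2 / (1 - r ^ 2) * / (INR n + 1) ^ 2)).
    + intros n y Hy. rewrite Boule_0 in Hy. simpl in Hy. apply cot_pf_term_bound; lra.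
    + apply ex_series_scal_inv_succ_sqr.
  - intros N y Hy. rewrite Boule_0 in Hy. simpl in Hy.
    apply (continuity_pt_finite_SF (fun n x => cot_pf_term x n)). intros n _.
    apply continuity_pt_ex_derive. unfold cot_pf_term. rewrite S_INR.
    pose proof (pos_INR n). assert (Hy1 : Rabs y < 1) by lra. apply Rabs_def2 in Hy1.
    auto_derive. nra.
  - rewrite Boule_0. simpl. unfold r. lra.
Qed.

Lemma cot_partial_succ N x : cot_partial (S N) x = 1 / x + sum_f_R0 (cot_pf_term x) N.
Proof. induction N as [|N IH]; [reflexivity|]. cbn [cot_partial sum_f_R0] in *. rewrite IH. ring. Qed.

Lemma is_lim_seq_cot_partial x : 0 < x < 1 -> is_lim_seq (fun N => cot_partial N x) (cot_pf x).
Proof.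
  intro Hx. apply is_lim_seq_incr_1.
  apply is_lim_seq_ext with (fun N => 1 / x + sum_f_R0 (cot_pf_term x) N).
  { intro N. now rewrite cot_partial_succ. }
  apply is_lim_seq_plus'; [apply is_lim_seq_const|].
  apply is_lim_seq_Series, ex_series_cot_pf_term. rewrite Rabs_pos_eq; lra.
Qed.

Lemma cot_partial_reflect N x : 0 < x < 1 ->
  cot_partial N (1 - x) = - cot_partial N x + 1 / (x + INR N) - 1 / (x - INR N - 1).
Proof.
  intro Hx. induction N as [|N IH]; cbn [cot_partial].
  - simpl. field. lra.
  - rewrite IH. unfold cot_pf_term. rewrite S_INR. pose proof (pos_INR N).
    field. repeat split; nra.
Qed.

Lemma cot_pf_reflect x : 0 < x < 1 -> cot_pf (1 - x) = - cot_pf x.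
Proof.
  intro Hx. apply (is_lim_seq_uniq (fun N => cot_partial N (1 - x))).
  { apply is_lim_seq_cot_partial; lra. }
  apply is_lim_seq_ext with (fun N => - cot_partial N x + / (INR N + x) - - / (INR N + (1 - x))).
  { intro N. rewrite cot_partial_reflect by auto. pose proof (pos_INR N). field. split; lra. }
  replace (- cot_pf x) with (- cot_pf x + 0 - - 0) by ring.
  apply is_lim_seq_minus'; [apply is_lim_seq_plus'|].
  - now apply is_lim_seq_opp', is_lim_seq_cot_partial.
  - apply is_lim_seq_inv_INR_plus.
  - apply is_lim_seq_opp', is_lim_seq_inv_INR_plus.
Qed.

Lemma cot_partial_duplication N x : 0 < x < 1 ->
  cot_partial N (x / 2) + cot_partial N ((x + 1) / 2)
  = 2 * cot_partial (2 * N) x + 2 / (x + 2 * INR N + 1).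
Proof.
  intro Hx. induction N as [|N IH].
  - simpl. field. lra.
  - replace (2 * S N)%nat with (S (S (2 * N))) by lia. cbn [cot_partial].
    transitivity (cot_partial N (x / 2) + cot_partial N ((x + 1) / 2)
                  + (cot_pf_term (x / 2) N + cot_pf_term ((x + 1) / 2) N)); [ring|].
    rewrite IH. unfold cot_pf_term. rewrite !S_INR, mult_INR. simpl (INR 2).
    pose proof (pos_INR N). field. repeat split; nra.
Qed.

Lemma cot_pf_duplication x : 0 < x < 1 -> cot_pf (x / 2) + cot_pf ((x + 1) / 2) = 2 * cot_pf x.
Proof.
  intro Hx.
  apply (is_lim_seq_uniq (fun N => cot_partial N (x / 2) + cot_partial N ((x + 1) / 2))).
  { apply is_lim_seq_plus'; apply is_lim_seq_cot_partial; lra. }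
  apply is_lim_seq_ext with (fun N => 2 * cot_partial (2 * N) x + / (INR N + (x + 1) / 2)).
  { intro N. rewrite cot_partial_duplication by auto. pose proof (pos_INR N). field. lra. }
  replace (2 * cot_pf x) with (2 * cot_pf x + 0) by ring.
  apply is_lim_seq_plus'; [apply is_lim_seq_scal_l' | apply is_lim_seq_inv_INR_plus].
  apply (is_lim_seq_subseq (fun N => cot_partial N x) (cot_pf x) (fun N => 2 * N)%nat).
  - intros P [N HN]. exists N. intros n Hn. apply HN. lia.
  - now apply is_lim_seq_cot_partial.
Qed.

Lemma pi_cot_duplication x : 0 < x < 1 ->
  pi_cot (x / 2) + pi_cot ((x + 1) / 2) = 2 * pi_cot x.
Proof.
  intro Hx. unfold pi_cot. pose proof PI_RGT_0.
  set (a := PI * x / 2).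
  replace (PI * (x / 2)) with a by (unfold a; field).
  replace (PI * ((x + 1) / 2)) with (a + PI / 2) by (unfold a; field).
  replace (PI * x) with (2 * a) by (unfold a; field).
  rewrite sin_2a, cos_2a, cos_plus, sin_plus, cos_PI2, sin_PI2.
  assert (0 < sin a) by (apply sin_gt_0; unfold a; nra).
  assert (0 < cos a) by (apply cos_gt_0; unfold a; nra).
  field. lra.
Qed.

Lemma pi_cot_reflect x : pi_cot (1 - x) = - pi_cot x.
Proof.
  unfold pi_cot. replace (PI * (1 - x)) with (PI - PI * x) by ring.
  rewrite cos_minus, sin_minus, cos_PI, sin_PI.
  replace (0 * cos (PI * x) - -1 * sin (PI * x)) with (sin (PI * x)) by ring.
  unfold Rdiv. ring.
Qed.

Lemma pi_cot_sub_inv_bound y : 0 < y <= 1 / 4 -> Rabs (pi_cot y - 1 / y) <= PI ^ 2 * y.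
Proof.
  intro Hy. destruct PI_bounds as [HP3 HP4].
  set (u := PI * y).
  assert (Hu : 0 < u <= 1) by (unfold u; nra).
  destruct (sin_bound u 0) as [Hs _]; [lra|lra|].
  destruct (cos_bound u 0) as [Hc _]; [lra|lra|].
  unfold sin_approx, sin_term, cos_approx, cos_term in Hs, Hc; simpl in Hs, Hc.
  pose proof (sin_lt_x u (proj1 Hu)). pose proof (COS_bound u).
  assert (Hsin : 0 < sin u) by nra.
  assert (Ey : y = u / PI) by (unfold u; field; lra).
  replace (pi_cot y - 1 / y) with (PI * (u * cos u - sin u) / (u * sin u))
    by (unfold pi_cot; fold u; rewrite Ey; field; lra).
  replace (PI ^ 2 * y) with (PI * (u ^ 3 / 2) / (u * (u / 2))) by (rewrite Ey; field; lra).
  apply Rabs_div_le.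
  - rewrite Rabs_mult, Rabs_pos_eq by lra. apply Rmult_le_compat_l; [lra|].
    apply Rabs_le. split; nra.
  - rewrite Rabs_pos_eq by nra. split; nra.
Qed.

(** Herglotz's trick: a continuous [H] on [[0, 1]] vanishing at the ends and
    satisfying [H (x/2) + H ((x+1)/2) = 2 H x] attains its maximum [M] at
    some [m]; the equation forces [H (m / 2^k) = M] for all [k], so [M = H 0]. *)
Lemma doubling_nonpos (H : R -> R) :
  (forall c, 0 <= c <= 1 -> continuity_pt H c) -> H 0 = 0 -> H 1 = 0 ->
  (forall x, 0 < x < 1 -> H (x / 2) + H ((x + 1) / 2) = 2 * H x) ->
  forall x, 0 <= x <= 1 -> H x <= 0.
Proof.
  intros Hc H0 H1 Hd.
  destruct (continuity_ab_maj H 0 1) as [m [Hm Hm01]]; [lra|auto|].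
  enough (Hmax : H m <= 0) by (intros x Hx; eapply Rle_trans; [apply Hm|]; auto).
  destruct (Req_dec m 0) as [->|Hm0]; [lra|].
  destruct (Req_dec m 1) as [->|Hm1]; [lra|].
  assert (Hk : forall k, H (m / 2 ^ k) = H m /\ 0 < m / 2 ^ k < 1).
  { induction k as [|k [IH1 IH2]].
    - simpl pow. replace (m / 1) with m by field. split; auto; lra.
    - set (z := m / 2 ^ k) in *.
      replace (m / 2 ^ S k) with (z / 2) by (unfold z; simpl pow; field; apply pow_nonzero; lra).
      assert (E := Hd z IH2). rewrite IH1 in E.
      assert (A := Hm ((z + 1) / 2) ltac:(lra)).
      assert (B := Hm (z / 2) ltac:(lra)).
      split; lra. }
  assert (L : is_lim_seq (fun k => m / 2 ^ k) 0).
  { apply is_lim_seq_ext with (fun k => m * (/ 2) ^ k); [intro k; now rewrite pow_inv|].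
    replace 0 with (m * 0) by ring. apply is_lim_seq_scal_l', is_lim_seq_geom.
    rewrite Rabs_pos_eq; lra. }
  assert (L0 := is_lim_seq_continuous H _ 0 (Hc 0 ltac:(lra)) L). rewrite H0 in L0.
  enough (H m = 0) by lra.
  apply (is_lim_seq_uniq (fun k => H (m / 2 ^ k))); [|exact L0].
  apply is_lim_seq_ext with (fun _ => H m); [intro k; symmetry; apply Hk|].
  apply is_lim_seq_const.
Qed.

(** The identities for [cot_pf] hold on [(0, 1)] only; extended by [0]
    outside, the difference is still continuous at the endpoints, since
    [pi_cot y - 1 / y] tends to [0]. *)
Definition cot_defect (x : R) : R :=
  if Rlt_dec 0 x then (if Rlt_dec x 1 then pi_cot x - cot_pf x else 0) else 0.

Lemma cot_defect_in x : 0 < x < 1 -> cot_defect x = pi_cot x - cot_pf x.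
Proof. intro H. unfold cot_defect. destruct (Rlt_dec 0 x), (Rlt_dec x 1); lra. Qed.

Lemma cot_defect_out x : ~ (0 < x < 1) -> cot_defect x = 0.
Proof. intro H. unfold cot_defect. destruct (Rlt_dec 0 x), (Rlt_dec x 1); auto; lra. Qed.

Lemma cot_defect_reflect x : cot_defect (1 - x) = - cot_defect x.
Proof.
  destruct (Rlt_dec 0 x), (Rlt_dec x 1);
    try (rewrite !cot_defect_out by lra; ring).
  rewrite !cot_defect_in by lra. rewrite pi_cot_reflect, cot_pf_reflect by lra. ring.
Qed.

Lemma cot_defect_duplication x : 0 < x < 1 ->
  cot_defect (x / 2) + cot_defect ((x + 1) / 2) = 2 * cot_defect x.
Proof.
  intro Hx. rewrite !cot_defect_in by lra.
  transitivity ((pi_cot (x / 2) + pi_cot ((x + 1) / 2)) - (cot_pf (x / 2) + cot_pf ((x + 1) / 2)));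
    [ring|].
  rewrite pi_cot_duplication, cot_pf_duplication by auto. ring.
Qed.

Lemma continuity_pt_cot_defect_in c : 0 < c < 1 -> continuity_pt cot_defect c.
Proof.
  intro Hc. destruct PI_bounds as [HP3 HP4].
  apply (continuity_pt_locally_ext (fun y => pi_cot y - cot_pf y) _ (Rmin c (1 - c))).
  - apply Rmin_glb_lt; lra.
  - intros y Hy. unfold Rdist in Hy. apply Rabs_def2 in Hy.
    pose proof (Rmin_l c (1 - c)). pose proof (Rmin_r c (1 - c)).
    rewrite cot_defect_in by lra. reflexivity.
  - apply continuity_pt_minus; [|apply continuity_pt_plus].
    + apply continuity_pt_ex_derive. unfold pi_cot.
      assert (0 < sin (PI * c)) by (apply sin_gt_0; nra).
      auto_derive. lra.
    + apply continuity_pt_ex_derive. auto_derive. lra.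
    + apply continuity_pt_Series_cot_pf_term. rewrite Rabs_pos_eq; lra.
Qed.

Lemma continuity_pt_cot_defect_0 : continuity_pt cot_defect 0.
Proof.
  destruct PI_bounds as [HP3 HP4].
  assert (HK0 : Series (cot_pf_term 0) = 0).
  { apply Series_null. intro n. unfold cot_pf_term. unfold Rdiv. ring. }
  intros eps Heps.
  destruct (continuity_pt_Series_cot_pf_term 0 ltac:(rewrite Rabs_R0; lra) (eps / 2))
    as [d [Hd HK]]; [lra|].
  exists (Rmin d (Rmin (1 / 4) (eps / (2 * PI ^ 2)))).
  split; [apply Rmin_glb_lt; [lra | apply Rmin_glb_lt; [lra | apply Rdiv_lt_0_compat; nra]]|].
  intros y [[_ Hy0] Hyd]. cbn [dist R_met] in *. unfold R_dist in *. rewrite Rminus_0_r in Hyd.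
  rewrite (cot_defect_out 0), Rminus_0_r by lra.
  destruct (Rlt_dec 0 y) as [Hpos|Hneg]; [|rewrite cot_defect_out, Rabs_R0 by lra; lra].
  rewrite Rabs_pos_eq in Hyd by lra.
  pose proof (Rmin_l d (Rmin (1 / 4) (eps / (2 * PI ^ 2)))).
  pose proof (Rmin_r d (Rmin (1 / 4) (eps / (2 * PI ^ 2)))).
  pose proof (Rmin_l (1 / 4) (eps / (2 * PI ^ 2))).
  pose proof (Rmin_r (1 / 4) (eps / (2 * PI ^ 2))).
  assert (Hpi : PI ^ 2 * y < eps / 2).
  { apply Rlt_le_trans with (PI ^ 2 * (eps / (2 * PI ^ 2))).
    - apply Rmult_lt_compat_l; [nra | lra].
    - right. field. lra. }
  assert (HW := pi_cot_sub_inv_bound y ltac:(lra)).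
  assert (HKy : Rabs (Series (cot_pf_term y)) < eps / 2).
  { assert (Hy : D_x no_cond 0 y /\ dist R_met y 0 < d).
    { split; [split; [exact I | lra]|]. cbn [dist R_met]. unfold R_dist.
      rewrite Rminus_0_r, Rabs_pos_eq; lra. }
    specialize (HK y Hy). cbn [dist R_met] in HK. unfold R_dist in HK.
    now rewrite HK0, Rminus_0_r in HK. }
  rewrite cot_defect_in by lra. unfold cot_pf.
  replace (pi_cot y - (1 / y + Series (cot_pf_term y)))
    with ((pi_cot y - 1 / y) + - Series (cot_pf_term y)) by ring.
  eapply Rle_lt_trans; [apply Rabs_triang|]. rewrite Rabs_Ropp. lra.
Qed.

Lemma continuity_pt_cot_defect c : 0 <= c <= 1 -> continuity_pt cot_defect c.
Proof.
  intro Hc.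
  destruct (Req_dec c 0) as [->|H0]; [apply continuity_pt_cot_defect_0|].
  destruct (Req_dec c 1) as [->|H1]; [|apply continuity_pt_cot_defect_in; lra].
  apply (continuity_pt_locally_ext (fun y => - cot_defect (1 - y)) _ 1); [lra| |].
  - intros y _. rewrite cot_defect_reflect. ring.
  - apply (continuity_pt_opp (fun y => cot_defect (1 - y))).
    apply (continuity_pt_comp (fun y => 1 - y) cot_defect).
    + apply continuity_pt_ex_derive. auto_derive. exact I.
    + replace (1 - 1) with 0 by ring. apply continuity_pt_cot_defect_0.
Qed.

Lemma cot_pf_eq_pi_cot x : 0 < x < 1 -> cot_pf x = pi_cot x.
Proof.
  intro Hx.
  assert (Hle := doubling_nonpos cot_defect continuity_pt_cot_defect
                   (cot_defect_out 0 ltac:(lra)) (cot_defect_out 1 ltac:(lra))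
                   cot_defect_duplication x ltac:(lra)).
  assert (Hge : - cot_defect x <= 0).
  { apply (doubling_nonpos (fun x => - cot_defect x)); try lra.
    - intros c Hc. apply continuity_pt_opp, continuity_pt_cot_defect, Hc.
    - rewrite cot_defect_out; lra.
    - rewrite cot_defect_out; lra.
    - intros z Hz. pose proof (cot_defect_duplication z Hz). lra. }
  rewrite cot_defect_in in Hle, Hge by auto. lra.
Qed.

(** * Partial fractions of the tangent *)

Definition half_odd (j : nat) : R := INR (2 * j + 1) / 2.

Definition tan_pf_term (y : R) (j : nat) : R := 2 * y / (half_odd j ^ 2 - y ^ 2).

Lemma sum_tan_pf_term N y : 0 < y < 1 / 2 ->
  sum_f_R0 (tan_pf_term y) N = cot_partial (S N) y - 2 * cot_partial (2 * S N) (2 * y).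
Proof.
  intro Hy. unfold tan_pf_term, half_odd. induction N as [|N IH].
  - simpl. unfold cot_pf_term. simpl. field. repeat split; nra.
  - replace (2 * S (S N))%nat with (S (S (2 * S N))) by lia.
    cbn [sum_f_R0 cot_partial] in *. rewrite IH. unfold cot_pf_term.
    repeat rewrite ?S_INR, ?mult_INR, ?plus_INR, ?INR_0.
    pose proof (pos_INR N). field. repeat split; nra.
Qed.

Lemma is_series_tan_pf_term y : 0 < y < 1 / 2 -> is_series (tan_pf_term y) (PI * tan (PI * y)).
Proof.
  intro Hy. apply is_series_sum_f_R0.
  apply is_lim_seq_ext with (fun N => cot_partial (S N) y - 2 * cot_partial (2 * S N) (2 * y)).
  { intro N. now rewrite sum_tan_pf_term. }
  replace (PI * tan (PI * y)) with (cot_pf y - 2 * cot_pf (2 * y)).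
  - apply is_lim_seq_minus'.
    + apply (is_lim_seq_incr_1 (fun N => cot_partial N y)), is_lim_seq_cot_partial; lra.
    + apply is_lim_seq_scal_l'.
      apply (is_lim_seq_subseq (fun N => cot_partial N (2 * y)) _ (fun N => 2 * S N)%nat).
      * intros P [N HN]. exists N. intros n Hn. apply HN. lia.
      * apply is_lim_seq_cot_partial; lra.
  - rewrite !cot_pf_eq_pi_cot by lra. unfold pi_cot, tan.
    replace (PI * (2 * y)) with (2 * (PI * y)) by ring.
    rewrite sin_2a, cos_2a. destruct PI_bounds.
    assert (0 < sin (PI * y)) by (apply sin_gt_0; nra).
    assert (0 < cos (PI * y)) by (apply cos_gt_0; nra).
    field. lra.
Qed.

(** * The Fourier series of [ln (2 cos (pi x / 2))] *)

Lemma cos_succ_succ k t :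
  cos (INR (S (S k)) * t) = 2 * cos t * cos (INR (S k) * t) - cos (INR k * t).
Proof.
  replace (INR (S (S k)) * t) with (INR (S k) * t + t) by (rewrite (S_INR (S k)); ring).
  replace (INR k * t) with (INR (S k) * t - t) by (rewrite S_INR; ring).
  rewrite cos_plus, cos_minus. ring.
Qed.

Lemma cos_geom_sum N q t :
  (1 - 2 * cos t * q + q ^ 2) * sum_f_R0 (fun n => q ^ n * cos (INR (S n) * t)) N
  = cos t - q + q ^ S N * (q * cos (INR (S N) * t) - cos (INR (S (S N)) * t)).
Proof.
  induction N as [|N IH]; cbn [sum_f_R0].
  - rewrite cos_succ_succ. simpl (INR 0); simpl (INR 1). rewrite !Rmult_1_l, Rmult_0_l, cos_0. ring.
  - rewrite Rmult_plus_distr_l, IH, (cos_succ_succ (S N)). cbn [pow]. ring.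
Qed.

Lemma cos_geom_denom_pos q t : Rabs q < 1 -> 0 < 1 - 2 * cos t * q + q ^ 2.
Proof.
  intro Hq. pose proof (COS_bound t). apply Rabs_def2 in Hq.
  destruct (Rle_dec 0 q); nra.
Qed.

Lemma is_lim_seq_geom_bounded (q B : R) (b : nat -> R) :
  Rabs q < 1 -> (forall N, Rabs (b N) <= B) -> is_lim_seq (fun N => q ^ N * b N) 0.
Proof.
  intros Hq Hb. apply is_lim_seq_abs_0.
  apply is_lim_seq_le_le with (fun _ => 0) (fun N => B * Rabs q ^ N).
  - intro N. split; [apply Rabs_pos|].
    rewrite Rabs_mult, <- RPow_abs, Rmult_comm.
    apply Rmult_le_compat_r; [apply pow_le, Rabs_pos | auto].
  - apply is_lim_seq_const.
  - replace (Finite 0) with (Finite (B * 0)) by (f_equal; ring).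
    apply is_lim_seq_scal_l', is_lim_seq_geom. now rewrite Rabs_Rabsolu.
Qed.

Lemma is_series_cos_geom q t : Rabs q < 1 ->
  is_series (fun n => q ^ n * cos (INR (S n) * t)) ((cos t - q) / (1 - 2 * cos t * q + q ^ 2)).
Proof.
  intro Hq. assert (HD := cos_geom_denom_pos q t Hq). apply is_series_sum_f_R0.
  set (D := 1 - 2 * cos t * q + q ^ 2) in *.
  set (rem := fun N => q ^ N * (q * cos (INR N * t) - cos (INR (S N) * t))).
  apply is_lim_seq_ext with (fun N => (cos t - q) / D + / D * rem (S N)).
  { intro N. apply (Rmult_eq_reg_l D); [|lra]. unfold D. rewrite cos_geom_sum. fold D.
    unfold rem. field. lra. }
  enough (Hrem : is_lim_seq (fun N => rem (S N)) 0).
  { assert (L := is_lim_seq_plus' _ _ _ _ (is_lim_seq_const ((cos t - q) / D))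
                   (is_lim_seq_scal_l' _ (/ D) 0 Hrem)).
    now rewrite Rmult_0_r, Rplus_0_r in L. }
  apply (is_lim_seq_incr_1 rem), (is_lim_seq_geom_bounded _ (Rabs q + 1)); auto.
  intro N. eapply Rle_trans; [apply Rabs_triang|]. rewrite Rabs_Ropp, Rabs_mult.
  pose proof (Rabs_pos q).
  assert (Rabs (cos (INR N * t)) <= 1) by (apply Rabs_le, COS_bound).
  assert (Rabs (cos (INR (S N) * t)) <= 1) by (apply Rabs_le, COS_bound).
  nra.
Qed.

Definition log_cos_term (t r : R) (m : nat) : R :=
  (-1) ^ (m + 1) * r ^ (m + 1) * cos (INR (m + 1) * t) / INR (m + 1).

Lemma log_cos_term_bound t r b m : Rabs r <= b -> b <= 1 -> Rabs (log_cos_term t r m) <= b ^ m.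
Proof.
  intros Hr Hb. unfold log_cos_term. rewrite INR_add1. pose proof (pos_INR m).
  unfold Rdiv. rewrite !Rabs_mult, Rabs_m1_pow, <- RPow_abs, Rabs_inv,
    (Rabs_pos_eq (INR m + 1)) by lra.
  assert (Hc : Rabs (cos ((INR m + 1) * t)) <= 1) by (apply Rabs_le, COS_bound).
  assert (Hp : Rabs r ^ (m + 1) <= b ^ m).
  { rewrite Nat.add_1_r. simpl. pose proof (Rabs_pos r).
    assert (Rabs r ^ m <= b ^ m) by (apply pow_incr; auto).
    pose proof (pow_le (Rabs r) m (Rabs_pos r)). nra. }
  assert (Hi : 0 < / (INR m + 1) <= 1).
  { split; [apply Rinv_0_lt_compat; lra|]. rewrite <- Rinv_1. apply Rinv_le_contravar; lra. }
  pose proof (pow_le (Rabs r) (m + 1) (Rabs_pos r)). pose proof (Rabs_pos (cos ((INR m + 1) * t))).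
  assert (Rabs r ^ (m + 1) * Rabs (cos ((INR m + 1) * t)) <= b ^ m) by nra.
  nra.
Qed.

Lemma Series_log_cos_term t r : 0 <= r < 1 ->
  Series (log_cos_term t r) = - (1 / 2) * ln (1 + 2 * r * cos t + r ^ 2).
Proof.
  intro Hr. set (b := (r + 1) / 2).
  assert (Hb : 0 < b < 1) by (unfold b; lra).
  set (D := fun y => Series (log_cos_term t y) + (1 / 2) * ln (1 + 2 * y * cos t + y ^ 2)).
  assert (HD : forall z, Rabs z < b -> derivable_pt_lim D z 0).
  { intros z Hz.
    assert (Hpos : 0 < 1 + 2 * z * cos t + z ^ 2).
    { replace (1 + 2 * z * cos t + z ^ 2) with (1 - 2 * cos t * - z + (- z) ^ 2) by ring.
      apply cos_geom_denom_pos. rewrite Rabs_Ropp. lra. }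
    assert (Hser : Series (fun m => - ((- z) ^ m * cos (INR (S m) * t)))
                   = - ((cos t + z) / (1 + 2 * z * cos t + z ^ 2))).
    { rewrite Series_opp. f_equal. apply is_series_unique.
      replace ((cos t + z) / (1 + 2 * z * cos t + z ^ 2))
        with ((cos t - - z) / (1 - 2 * cos t * - z + (- z) ^ 2)) by (f_equal; ring).
      apply is_series_cos_geom. rewrite Rabs_Ropp. lra. }
    replace 0 with (Series (fun m => - ((- z) ^ m * cos (INR (S m) * t)))
                    + (1 / 2) * ((2 * cos t + 2 * z) / (1 + 2 * z * cos t + z ^ 2)))
      by (rewrite Hser; field; lra).
    apply (derivable_pt_lim_plus (fun y => Series (log_cos_term t y))).
    - apply (derivable_pt_lim_Series (fun m y => log_cos_term t y m)
               (fun m y => - ((- y) ^ m * cos (INR (S m) * t))) (fun m => b ^ m) 0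
               (mkposreal b (proj1 Hb))).
      + intros m y _. apply is_derive_Reals. unfold log_cos_term.
        auto_derive; [exact I|]. rewrite Nat.add_1_r. simpl pred.
        replace (- y) with (-1 * y) by ring. rewrite Rpow_mult_distr. simpl pow.
        field. apply not_0_INR. lia.
      + intros m y Hy. rewrite Boule_0 in Hy. simpl in Hy.
        rewrite Rabs_Ropp, Rabs_mult, <- RPow_abs, Rabs_Ropp.
        assert (Rabs (cos (INR (S m) * t)) <= 1) by (apply Rabs_le, COS_bound).
        assert (Rabs y ^ m <= b ^ m) by (apply pow_incr; split; [apply Rabs_pos | lra]).
        pose proof (pow_le (Rabs y) m (Rabs_pos y)). nra.
      + apply ex_series_geom. rewrite Rabs_pos_eq; lra.
      + intros y Hy. rewrite Boule_0 in Hy. simpl in Hy.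
        apply (ex_series_Rabs_le _ (fun m => b ^ m)).
        * intro m. apply log_cos_term_bound; lra.
        * apply ex_series_geom. rewrite Rabs_pos_eq; lra.
      + rewrite Boule_0. simpl. exact Hz.
    - apply is_derive_Reals. auto_derive; [lra|]. field. lra. }
  assert (D0 : D 0 = 0).
  { unfold D. rewrite Series_null.
    - replace (1 + 2 * 0 * cos t + 0 ^ 2) with 1 by ring. rewrite ln_1. ring.
    - intro m. unfold log_cos_term. rewrite pow_i by lia. unfold Rdiv. ring. }
  assert (Dr : D r = D 0).
  { apply null_derivative_eq; [lra| |].
    - intros z Hz. apply HD. rewrite Rabs_pos_eq; unfold b; lra.
    - intros z Hz. apply derivable_continuous_pt. exists 0.
      apply HD. rewrite Rabs_pos_eq; unfold b; lra. }
  rewrite D0 in Dr. unfold D in Dr. lra.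
Qed.

(** [Series (abel_sin_term r)], [r < 1], are Abel means of [Ssin 2]; unlike
    the termwise derivative of [Ssin 2], their derivatives converge. *)
Definition abel_sin_term (r x : R) (m : nat) : R :=
  (-1) ^ (m + 1) * r ^ (m + 1) * sin (PI * INR (m + 1) * x) / INR (m + 1) ^ 2.

Lemma abel_sin_term_bound r x m : Rabs r <= 1 -> Rabs (abel_sin_term r x m) <= / (INR m + 1) ^ 2.
Proof.
  intro Hr. unfold abel_sin_term. rewrite INR_add1. pose proof (pos_INR m).
  unfold Rdiv. rewrite !Rabs_mult, Rabs_m1_pow, <- RPow_abs, Rabs_inv,
    (Rabs_pos_eq ((INR m + 1) ^ 2)) by nra.
  assert (Hs : Rabs (sin (PI * (INR m + 1) * x)) <= 1) by (apply Rabs_le, SIN_bound).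
  assert (Hp : Rabs r ^ (m + 1) <= 1)
    by (rewrite <- (pow1 (m + 1)); apply pow_incr; split; auto using Rabs_pos).
  pose proof (pow_le (Rabs r) (m + 1) (Rabs_pos r)).
  pose proof (Rabs_pos (sin (PI * (INR m + 1) * x))).
  assert (0 < / (INR m + 1) ^ 2) by (apply Rinv_0_lt_compat; nra).
  assert (Rabs r ^ (m + 1) * Rabs (sin (PI * (INR m + 1) * x)) <= 1) by nra.
  nra.
Qed.

Lemma abel_sin_derivative r x : 0 <= r < 1 ->
  derivable_pt_lim (fun x => Series (abel_sin_term r x)) x
    (- (PI / 2) * ln (1 + 2 * r * cos (PI * x) + r ^ 2)).
Proof.
  intro Hr. pose proof PI_RGT_0.
  replace (- (PI / 2) * ln (1 + 2 * r * cos (PI * x) + r ^ 2))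
    with (Series (fun m => PI * log_cos_term (PI * x) r m))
    by (rewrite Series_scal_l, Series_log_cos_term by auto; field).
  apply (derivable_pt_lim_Series (fun m y => abel_sin_term r y m)
           (fun m y => PI * log_cos_term (PI * y) r m) (fun m => PI * r ^ m) x
           (mkposreal 1 Rlt_0_1)).
  - intros m y _. apply is_derive_Reals. unfold abel_sin_term, log_cos_term.
    rewrite INR_add1. pose proof (pos_INR m).
    auto_derive; [exact I|].
    replace ((INR m + 1) * (PI * y)) with (PI * (INR m + 1) * y) by ring. field. lra.
  - intros m y _. rewrite Rabs_mult, Rabs_pos_eq by lra.
    apply Rmult_le_compat_l; [lra|]. apply log_cos_term_bound; rewrite ?Rabs_pos_eq; lra.
  - apply (ex_series_scal_l PI (fun m => r ^ m)), ex_series_geom. rewrite Rabs_pos_eq; lra.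
  - intros y _. apply (ex_series_Rabs_le _ _ (fun m => abel_sin_term_bound r y m
                         ltac:(rewrite Rabs_pos_eq; lra))).
    apply ex_series_inv_succ_sqr.
  - apply Boule_center.
Qed.

(** Radii [1 - s^2] rather than [1 - s] keep the radius in [[0, 1]] on a
    whole neighbourhood of [s = 0]. *)
Lemma is_lim_seq_abel_sin x :
  is_lim_seq (fun k => Series (abel_sin_term (1 - (/ (INR k + 2)) ^ 2) x)) (Ssin 2 x).
Proof.
  set (f := fun s => Series (fun m => abel_sin_term (1 - s ^ 2) x m)).
  assert (Hc : continuity_pt f 0).
  { apply (CVU_continuity (fun n s => sum_f_R0 (fun m => abel_sin_term (1 - s ^ 2) x m) n)
             f 0 (mkposreal 1 Rlt_0_1)); [| |apply Boule_center].
    - apply (CVU_Series (fun m s => abel_sin_term (1 - s ^ 2) x m) (fun m => / (INR m + 1) ^ 2)).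
      + intros n y Hy. rewrite Boule_0 in Hy. simpl in Hy. apply Rabs_def2 in Hy.
        apply abel_sin_term_bound. rewrite Rabs_pos_eq; nra.
      + apply ex_series_inv_succ_sqr.
    - intros n y _. apply (continuity_pt_finite_SF (fun m s => abel_sin_term (1 - s ^ 2) x m)).
      intros m _. apply continuity_pt_ex_derive. unfold abel_sin_term. auto_derive. exact I. }
  replace (Ssin 2 x) with (f 0).
  - apply is_lim_seq_Reals, (continuity_seq f (fun k => / (INR k + 2)) 0 Hc).
    apply is_lim_seq_Reals, is_lim_seq_inv_INR_plus.
  - unfold f, Ssin. apply Series_ext. intro m. unfold abel_sin_term.
    replace (1 - 0 ^ 2) with 1 by ring. now rewrite pow1, Rmult_1_r.
Qed.

Lemma ln_sub_le u v : 0 < u -> 0 < v -> ln v - ln u <= (v - u) / u.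
Proof.
  intros Hu Hv. rewrite <- ln_div by auto.
  pose proof (exp_ineq1_le (ln (v / u))) as H.
  rewrite exp_ln in H by (apply Rdiv_lt_0_compat; auto).
  replace ((v - u) / u) with (v / u - 1) by (field; lra). lra.
Qed.

Lemma Rabs_ln_sub_le m a b : 0 < m -> m <= a -> m <= b -> Rabs (ln b - ln a) <= Rabs (b - a) / m.
Proof.
  intros Hm Ha Hb.
  assert (Hq : forall d u, m <= u -> d / u <= Rabs d / m).
  { intros d u Hu. apply Rle_trans with (Rabs d / u).
    - unfold Rdiv. apply Rmult_le_compat_r; [apply Rlt_le, Rinv_0_lt_compat; lra | apply Rle_abs].
    - unfold Rdiv. apply Rmult_le_compat_l; [apply Rabs_pos | apply Rinv_le_contravar; lra]. }
  pose proof (ln_sub_le a b ltac:(lra) ltac:(lra)). pose proof (Hq (b - a) a Ha).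
  pose proof (ln_sub_le b a ltac:(lra) ltac:(lra)).
  pose proof (Hq (a - b) b Hb) as Hba. rewrite Rabs_minus_sym in Hba.
  apply Rabs_le. split; lra.
Qed.

Lemma Rabs_ln_abel_sub_le s c : 0 < s <= 1 / 2 -> -1 < c <= 1 ->
  Rabs (ln (1 + 2 * (1 - s) * c + (1 - s) ^ 2) - ln (2 + 2 * c)) <= 10 * s / (2 + 2 * c).
Proof.
  intros Hs Hc. set (A := 2 + 2 * c).
  replace (1 + 2 * (1 - s) * c + (1 - s) ^ 2) with ((1 - s) * A + s ^ 2) by (unfold A; ring).
  replace (10 * s / A) with (5 * s / (A / 2)) by (field; unfold A; lra).
  assert (Hdiff : Rabs ((1 - s) * A + s ^ 2 - A) <= 5 * s).
  { replace ((1 - s) * A + s ^ 2 - A) with (s * (s - A)) by ring.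
    assert (Rabs (s - A) <= 5) by (apply Rabs_le; unfold A; split; lra).
    rewrite Rabs_mult, Rabs_pos_eq by lra. nra. }
  eapply Rle_trans; [apply (Rabs_ln_sub_le (A / 2)); unfold A; nra|].
  apply Rmult_le_compat_r; [apply Rlt_le, Rinv_0_lt_compat; unfold A; lra | exact Hdiff].
Qed.

Lemma Ssin2_derivative x : -1 < x < 1 ->
  derivable_pt_lim (Ssin 2) x (- (PI / 2) * ln (2 + 2 * cos (PI * x))).
Proof.
  intro Hx. pose proof PI_RGT_0.
  set (a := (Rabs x + 1) / 2).
  assert (Hx1 : Rabs x < 1) by (apply Rabs_def1; lra).
  assert (Hxa : Rabs x < a) by (unfold a; lra).
  assert (Ha : 0 < a < 1) by (unfold a; pose proof (Rabs_pos x); lra).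
  set (s := fun k : nat => (/ (INR k + 2)) ^ 2).
  assert (Hs : forall k, 0 < s k <= 1 / 2).
  { intro k. unfold s. pose proof (pos_INR k).
    assert (0 < / (INR k + 2) <= / 2) by (split; [apply Rinv_0_lt_compat | apply Rinv_le_contravar]; lra).
    nra. }
  assert (Hcos : forall y, Rabs y < a -> cos (PI * a) <= cos (PI * y)).
  { intros y Hy. replace (cos (PI * y)) with (cos (PI * Rabs y)).
    - apply Rlt_le, cos_decreasing_1; pose proof (Rabs_pos y); nra.
    - destruct (Rle_dec 0 y); [rewrite Rabs_pos_eq by lra | rewrite Rabs_left, <- cos_neg by lra];
        f_equal; ring. }
  assert (Hca : -1 < cos (PI * a)).
  { rewrite <- cos_PI. apply cos_decreasing_1; nra. }
  set (d := 2 + 2 * cos (PI * a)).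
  assert (Hd : 0 < d) by (unfold d; lra).
  apply (CVU_derivable (fun k y => Series (abel_sin_term (1 - s k) y))
           (fun k y => - (PI / 2) * ln (1 + 2 * (1 - s k) * cos (PI * y) + (1 - s k) ^ 2))
           (Ssin 2) (fun y => - (PI / 2) * ln (2 + 2 * cos (PI * y))) 0 (mkposreal a (proj1 Ha))).
  - intros eps Heps.
    assert (Ls : is_lim_seq s 0).
    { unfold s. replace (Finite 0) with (Finite (0 ^ 2)) by (f_equal; ring).
      apply (is_lim_seq_continuous (fun z => z ^ 2)); [apply derivable_continuous_pt, derivable_pt_pow|].
      apply is_lim_seq_inv_INR_plus. }
    destruct (proj1 (is_lim_seq_Reals _ _) Ls (eps * d / (10 * PI))) as [N HN].
    { apply Rdiv_lt_0_compat; nra. }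
    exists N. intros k y Hk Hy. rewrite Boule_0 in Hy. simpl in Hy.
    specialize (HN k Hk). unfold Rdist in HN. rewrite Rminus_0_r, Rabs_pos_eq in HN by (pose proof (Hs k); lra).
    pose proof (Hcos y Hy). pose proof (COS_bound (PI * y)).
    assert (HL := Rabs_ln_abel_sub_le (s k) (cos (PI * y)) (Hs k) ltac:(lra)).
    replace (- (PI / 2) * ln (2 + 2 * cos (PI * y))
             - - (PI / 2) * ln (1 + 2 * (1 - s k) * cos (PI * y) + (1 - s k) ^ 2))
      with (PI / 2 * (ln (1 + 2 * (1 - s k) * cos (PI * y) + (1 - s k) ^ 2) - ln (2 + 2 * cos (PI * y))))
      by ring.
    rewrite Rabs_mult, (Rabs_pos_eq (PI / 2)) by lra.
    assert (Hb : 10 * s k / (2 + 2 * cos (PI * y)) <= 10 * s k / d).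
    { unfold Rdiv. apply Rmult_le_compat_l; [pose proof (Hs k); lra|].
      apply Rinv_le_contravar; [lra | unfold d; lra]. }
    assert (Hsk : 10 * s k / d < eps / PI).
    { apply (Rmult_lt_reg_r (d / 10)); [lra|].
      replace (10 * s k / d * (d / 10)) with (s k) by (field; lra).
      replace (eps / PI * (d / 10)) with (eps * d / (10 * PI)) by (field; lra). lra. }
    apply Rle_lt_trans with (PI / 2 * (eps / PI)).
    + apply Rmult_le_compat_l; lra.
    + replace (PI / 2 * (eps / PI)) with (eps / 2) by (field; lra). lra.
  - intros y _. apply is_lim_seq_Reals, is_lim_seq_abel_sin.
  - intros k y _. apply abel_sin_derivative. pose proof (Hs k). lra.
  - rewrite Boule_0. exact Hxa.
Qed.

Lemma alt_trig_term_bound m k (v : R) : (2 <= k)%nat -> Rabs v <= 1 ->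
  Rabs ((-1) ^ (m + 1) * v / INR (m + 1) ^ k) <= / (INR m + 1) ^ 2.
Proof.
  intros Hk Hv. rewrite INR_add1. pose proof (pos_INR m).
  unfold Rdiv. rewrite !Rabs_mult, Rabs_m1_pow, Rabs_inv, (Rabs_pos_eq ((INR m + 1) ^ k))
    by (apply pow_le; lra).
  apply Rle_trans with (/ (INR m + 1) ^ k).
  - assert (0 < / (INR m + 1) ^ k) by (apply Rinv_0_lt_compat, pow_lt; lra).
    pose proof (Rabs_pos v). nra.
  - apply Rinv_le_contravar; [nra | apply Rle_pow; auto; lra].
Qed.

Lemma ex_series_Ssin k x : (2 <= k)%nat ->
  ex_series (fun m => (-1) ^ (m + 1) * sin (PI * INR (m + 1) * x) / INR (m + 1) ^ k).
Proof.
  intro Hk. apply (ex_series_Rabs_le _ (fun m => / (INR m + 1) ^ 2)); [|apply ex_series_inv_succ_sqr].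
  intro m. apply alt_trig_term_bound; auto. apply Rabs_le, SIN_bound.
Qed.

Lemma ex_series_Scos k x : (2 <= k)%nat ->
  ex_series (fun m => (-1) ^ (m + 1) * cos (PI * INR (m + 1) * x) / INR (m + 1) ^ k).
Proof.
  intro Hk. apply (ex_series_Rabs_le _ (fun m => / (INR m + 1) ^ 2)); [|apply ex_series_inv_succ_sqr].
  intro m. apply alt_trig_term_bound; auto. apply Rabs_le, COS_bound.
Qed.

Lemma Ssin_derivative k x : (2 <= k)%nat -> derivable_pt_lim (Ssin (S k)) x (PI * Scos k x).
Proof.
  intro Hk. unfold Scos. rewrite <- Series_scal_l. pose proof PI_RGT_0.
  apply (derivable_pt_lim_Series
           (fun m y => (-1) ^ (m + 1) * sin (PI * INR (m + 1) * y) / INR (m + 1) ^ S k)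
           (fun m y => PI * ((-1) ^ (m + 1) * cos (PI * INR (m + 1) * y) / INR (m + 1) ^ k))
           (fun m => PI * / (INR m + 1) ^ 2) x (mkposreal 1 Rlt_0_1)).
  - intros m y _. apply is_derive_Reals. rewrite INR_add1. pose proof (pos_INR m).
    assert ((INR m + 1) ^ k <> 0) by (apply pow_nonzero; lra).
    auto_derive; simpl pow; [split; auto; lra|]. field. split; auto; lra.
  - intros m y _. rewrite Rabs_mult, Rabs_pos_eq by lra.
    apply Rmult_le_compat_l; [lra|]. apply alt_trig_term_bound; auto. apply Rabs_le, COS_bound.
  - apply ex_series_scal_inv_succ_sqr.
  - intros y _. apply ex_series_Ssin. lia.
  - apply Boule_center.
Qed.

Lemma Scos_derivative k x : (2 <= k)%nat -> derivable_pt_lim (Scos (S k)) x (- PI * Ssin k x).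
Proof.
  intro Hk. unfold Ssin. rewrite <- Series_scal_l. pose proof PI_RGT_0.
  apply (derivable_pt_lim_Series
           (fun m y => (-1) ^ (m + 1) * cos (PI * INR (m + 1) * y) / INR (m + 1) ^ S k)
           (fun m y => - PI * ((-1) ^ (m + 1) * sin (PI * INR (m + 1) * y) / INR (m + 1) ^ k))
           (fun m => PI * / (INR m + 1) ^ 2) x (mkposreal 1 Rlt_0_1)).
  - intros m y _. apply is_derive_Reals. rewrite INR_add1. pose proof (pos_INR m).
    assert ((INR m + 1) ^ k <> 0) by (apply pow_nonzero; lra).
    auto_derive; simpl pow; [split; auto; lra|]. field. split; auto; lra.
  - intros m y _. rewrite Rabs_mult, Rabs_Ropp, Rabs_pos_eq by lra.
    apply Rmult_le_compat_l; [lra|]. apply alt_trig_term_bound; auto. apply Rabs_le, SIN_bound.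
  - apply ex_series_scal_inv_succ_sqr.
  - intros y _. apply ex_series_Scos. lia.
  - apply Boule_center.
Qed.

Lemma Ssin_0 k : Ssin k 0 = 0.
Proof. apply Series_null. intro m. rewrite Rmult_0_r, sin_0. unfold Rdiv. ring. Qed.

Lemma Scos_0 k : Scos k 0 = - zetaE k.
Proof.
  unfold Scos, zetaE. rewrite <- Series_opp. apply Series_ext. intro m.
  rewrite Rmult_0_r, cos_0, Nat.add_1_r. simpl pow. unfold Rdiv. ring.
Qed.

Lemma Ssin2_is_derive z : -1 < z < 1 -> is_derive (Ssin 2) z (- PI * ln (2 * cos (PI * z / 2))).
Proof.
  intro Hz. apply is_derive_Reals. pose proof PI_RGT_0.
  assert (Hc : 0 < cos (PI * z / 2)) by (apply cos_gt_0; nra).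
  replace (- PI * ln (2 * cos (PI * z / 2))) with (- (PI / 2) * ln (2 + 2 * cos (PI * z))).
  { now apply Ssin2_derivative. }
  set (u := PI * z / 2) in *.
  replace (PI * z) with (2 * u) by (unfold u; field). rewrite cos_2a_cos.
  replace (2 + 2 * (2 * cos u * cos u - 1)) with ((2 * cos u) * (2 * cos u)) by ring.
  rewrite ln_mult by lra. field.
Qed.

Lemma Scos3_is_derive z : is_derive (Scos 3) z (- PI * Ssin 2 z).
Proof. apply is_derive_Reals, Scos_derivative; lia. Qed.

Lemma Ssin4_is_derive z : is_derive (Ssin 4) z (PI * Scos 3 z).
Proof. apply is_derive_Reals, Ssin_derivative; lia. Qed.

Lemma Scos5_is_derive z : is_derive (Scos 5) z (- PI * Ssin 4 z).
Proof. apply is_derive_Reals, Scos_derivative; lia. Qed.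

(** * The logarithm of the multiple cosine *)

Definition Pr_exponent (r : nat) (t : R) : R :=
  sum_f_R0 (fun k => t ^ (k + 1) / INR (k + 1)) (r - 1).

Definition log_mcos_factor (r : nat) (y : R) (j : nat) : R :=
  half_odd j ^ (r - 1) *
  (ln (1 - y / half_odd j) + Pr_exponent r (y / half_odd j)
   + (-1) ^ (r - 1) * (ln (1 - - (y / half_odd j)) + Pr_exponent r (- (y / half_odd j)))).

Definition log_mcos (r : nat) (y : R) : R := Series (log_mcos_factor r y).

Lemma half_odd_eq j : half_odd j = INR j + 1 / 2.
Proof. unfold half_odd. rewrite plus_INR, mult_INR. simpl. field. Qed.

Lemma Rabs_div_half_odd_lt y j : Rabs y < 1 / 2 -> Rabs (y / half_odd j) < 1.
Proof.
  intro Hy. rewrite half_odd_eq. pose proof (pos_INR j).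
  unfold Rdiv. rewrite Rabs_mult, Rabs_inv, (Rabs_pos_eq (INR j + _)) by lra.
  apply (Rmult_lt_reg_r (INR j + 1 / 2)); [lra|].
  rewrite Rmult_assoc, Rinv_l by lra. lra.
Qed.

Lemma mcos_factor_exp r y j : Rabs y < 1 / 2 ->
  mcos_factor r y (2 * j + 1) = exp (log_mcos_factor r y j).
Proof.
  intro Hy. pose proof (Rabs_div_half_odd_lt y j Hy) as Ht. apply Rabs_def2 in Ht.
  unfold mcos_factor, Pr, log_mcos_factor, Pr_exponent, Rpower. cbv zeta. fold (half_odd j).
  set (t := y / half_odd j) in *.
  f_equal. f_equal.
  assert (0 < 1 - t) by lra. assert (0 < 1 - - t) by lra.
  rewrite !ln_mult, !ln_exp; [ring | auto using exp_pos, Rmult_lt_0_compat ..].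
Qed.

Lemma mcos_partial_succ_exp r y N : Rabs y < 1 / 2 ->
  mcos_partial r y (S N) = exp (sum_f_R0 (log_mcos_factor r y) N).
Proof.
  intro Hy. induction N as [|N IH].
  - simpl. rewrite Rmult_1_l. exact (mcos_factor_exp r y 0 Hy).
  - change (mcos_partial r y (S (S N)))
      with (mcos_partial r y (S N) * mcos_factor r y (2 * S N + 1)).
    rewrite IH, mcos_factor_exp, <- exp_plus by auto. reflexivity.
Qed.

Lemma Pr_exponent_derivative r t :
  is_derive (Pr_exponent r) t (sum_f_R0 (fun k => t ^ k) (r - 1)).
Proof.
  apply is_derive_Reals, (derivable_pt_lim_sum_f_R0 (fun k t => t ^ (k + 1) / INR (k + 1))
                                                  (fun k t => t ^ k)).
  intro k. apply is_derive_Reals. rewrite INR_add1. pose proof (pos_INR k).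
  auto_derive; [lra|]. rewrite Nat.add_1_r, S_INR. simpl pred. field. lra.
Qed.

(** The truncated exponent makes the factor's logarithmic derivative a
    single geometric remainder, [t^r / (t - 1)]; both signs combine into the
    tangent partial fraction. *)
Lemma log_mcos_factor_derivative r' y j : Rabs y < 1 / 2 ->
  derivable_pt_lim (fun y => log_mcos_factor (S r') y j) y (- y ^ r' * tan_pf_term y j).
Proof.
  intro Hy. pose proof (Rabs_div_half_odd_lt y j Hy) as Ht. apply Rabs_def2 in Ht.
  assert (Hh : 1 / 2 <= half_odd j) by (rewrite half_odd_eq; pose proof (pos_INR j); lra).
  apply is_derive_Reals. unfold log_mcos_factor, tan_pf_term.
  replace (S r' - 1)%nat with r' by lia.
  auto_derive.
  { repeat split; try lra; eexists; apply Pr_exponent_derivative. }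
  rewrite !(is_derive_unique _ _ _ (Pr_exponent_derivative _ _)).
  replace (S r' - 1)%nat with r' by lia.
  change (y * / half_odd j) with (y / half_odd j).
  rewrite !tech3 by lra.
  set (h := half_odd j) in *.
  assert (E1 : (y / h) ^ S r' = y ^ S r' / h ^ S r')
    by (unfold Rdiv; rewrite Rpow_mult_distr, pow_inv; auto).
  assert (E2 : (- (y / h)) ^ S r' = (-1) ^ S r' * (y ^ S r' / h ^ S r')).
  { rewrite <- E1. replace (- (y / h)) with (-1 * (y / h)) by ring. apply Rpow_mult_distr. }
  rewrite E2, E1. simpl pow.
  assert (HP : 0 < h ^ r') by (apply pow_lt; lra).
  assert (Hyh : Rabs y < h) by lra. apply Rabs_def2 in Hyh.
  destruct (Nat.Even_or_Odd r') as [[k ->]|[k ->]].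
  - rewrite pow_1_even. field. repeat split; try lra. nra.
  - replace (2 * k + 1)%nat with (S (2 * k)) by lia. rewrite pow_1_odd.
    field. repeat split; try (apply pow_nonzero; lra); try lra. nra.
Qed.

Lemma log_mcos_factor_0 r j : log_mcos_factor r 0 j = 0.
Proof.
  unfold log_mcos_factor, Pr_exponent. replace (0 / half_odd j) with 0 by (unfold Rdiv; ring).
  rewrite Ropp_0, Rminus_0_r, ln_1, (sum_eq_R0 (fun k => 0 ^ (k + 1) / INR (k + 1))).
  - ring.
  - intros n _. rewrite pow_i by lia. unfold Rdiv. ring.
Qed.

Lemma Rabs_tan_pf_term_le r' y j b : 0 <= b < 1 / 2 -> Rabs y <= b ->
  Rabs (- y ^ r' * tan_pf_term y j) <= 2 / (1 / 4 - b ^ 2) * / (INR j + 1) ^ 2.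
Proof.
  intros Hb Hy. unfold tan_pf_term. rewrite half_odd_eq. pose proof (pos_INR j).
  assert (Hy2 : y ^ 2 <= b ^ 2)
    by (rewrite <- pow2_abs; apply pow_incr; split; auto using Rabs_pos).
  assert (Hb2 : b ^ 2 < 1 / 4) by nra.
  assert (Hn : 1 <= (INR j + 1) ^ 2) by nra.
  replace (- y ^ r' * (2 * y / ((INR j + 1 / 2) ^ 2 - y ^ 2)))
    with (- (2 * y ^ S r') / ((INR j + 1 / 2) ^ 2 - y ^ 2)) by (simpl; field; nra).
  replace (2 / (1 / 4 - b ^ 2) * / (INR j + 1) ^ 2)
    with (2 / ((INR j + 1) ^ 2 * (1 / 4 - b ^ 2))) by (field; split; nra).
  apply Rabs_div_le.
  - rewrite Rabs_Ropp, Rabs_mult, <- RPow_abs, (Rabs_pos_eq 2) by lra.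
    assert (Rabs y ^ S r' <= 1) by (rewrite <- (pow1 (S r')); apply pow_incr; split; [apply Rabs_pos | lra]).
    lra.
  - assert (0 <= b ^ 2 * ((INR j + 1) ^ 2 - 1)) by (apply Rmult_le_pos; nra).
    split; [nra|]. rewrite Rabs_pos_eq by nra. nra.
Qed.

Lemma ex_series_log_mcos_factor r' y : Rabs y < 1 / 2 -> ex_series (log_mcos_factor (S r') y).
Proof.
  intro Hy. set (M := 2 / (1 / 4 - Rabs y ^ 2)).
  apply (ex_series_Rabs_le _ (fun j => Rabs y * (M * / (INR j + 1) ^ 2))).
  - intro j.
    replace (log_mcos_factor (S r') y j)
      with (log_mcos_factor (S r') y j - log_mcos_factor (S r') 0 j)
      by (rewrite log_mcos_factor_0; ring).
    replace (Rabs y) with (Rabs (y - 0)) by (now rewrite Rminus_0_r).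
    rewrite Rmult_comm.
    apply (bounded_variation (fun z => log_mcos_factor (S r') z j)
             (fun z => - z ^ r' * tan_pf_term z j)).
    intros t Ht. rewrite !Rminus_0_r in Ht. split.
    + apply is_derive_Reals, log_mcos_factor_derivative. lra.
    + apply Rabs_tan_pf_term_le; [pose proof (Rabs_pos y); lra | exact Ht].
  - exact (ex_series_scal_l (Rabs y) _ (ex_series_scal_inv_succ_sqr M)).
Qed.

Lemma is_lim_seq_mcos_partial r' y : Rabs y < 1 / 2 ->
  is_lim_seq (mcos_partial (S r') y) (exp (log_mcos (S r') y)).
Proof.
  intro Hy. apply is_lim_seq_incr_1.
  apply is_lim_seq_ext with (fun N => exp (sum_f_R0 (log_mcos_factor (S r') y) N)).
  { intro N. now rewrite mcos_partial_succ_exp. }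
  apply is_lim_seq_continuous; [apply derivable_continuous_pt, derivable_pt_exp|].
  apply is_lim_seq_Series, ex_series_log_mcos_factor, Hy.
Qed.

Lemma log_mcos_derivative r' y : Rabs y < 1 / 2 ->
  derivable_pt_lim (log_mcos (S r')) y (Series (fun j => - y ^ r' * tan_pf_term y j)).
Proof.
  intro Hy. set (b := (Rabs y + 1 / 2) / 2).
  assert (Hb : 0 < b < 1 / 2) by (unfold b; pose proof (Rabs_pos y); lra).
  apply (derivable_pt_lim_Series (fun j z => log_mcos_factor (S r') z j)
           (fun j z => - z ^ r' * tan_pf_term z j)
           (fun j => 2 / (1 / 4 - b ^ 2) * / (INR j + 1) ^ 2) 0 (mkposreal b (proj1 Hb)));
    try (intros ? z Hz || intros z Hz); try rewrite Boule_0 in *; simpl in *.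
  - apply log_mcos_factor_derivative. lra.
  - apply Rabs_tan_pf_term_le; lra.
  - apply ex_series_scal_inv_succ_sqr.
  - apply ex_series_log_mcos_factor. lra.
  - unfold b; lra.
Qed.

Lemma log_mcos_derivative_tan r' y : 0 < y < 1 / 2 ->
  derivable_pt_lim (log_mcos (S r')) y (- y ^ r' * (PI * tan (PI * y))).
Proof.
  intro Hy. replace (- y ^ r' * (PI * tan (PI * y)))
    with (Series (fun j => - y ^ r' * tan_pf_term y j)).
  - apply log_mcos_derivative. rewrite Rabs_pos_eq; lra.
  - rewrite Series_scal_l. f_equal. apply is_series_unique, is_series_tan_pf_term, Hy.
Qed.

Lemma log_mcos_half_eq r' (G : R -> R) :
  (forall z, 0 <= z < 1 -> ex_derive G z) ->
  (forall z, 0 < z < 1 -> is_derive G z (- (PI / 2) * (z / 2) ^ r' * tan (PI * z / 2))) ->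
  G 0 = 0 ->
  forall x, 0 <= x < 1 -> log_mcos (S r') (x / 2) = G x.
Proof.
  intros HG HG' G0 x Hx.
  set (D := fun z => log_mcos (S r') (z / 2) - G z).
  assert (HD : forall z, 0 <= z < 1 -> ex_derive D z).
  { intros z Hz. apply (ex_derive_minus (fun z => log_mcos (S r') (z / 2))); [|now apply HG].
    apply (ex_derive_comp (log_mcos (S r')) (fun z => z / 2)); [|auto_derive; exact I].
    eexists. apply is_derive_Reals, log_mcos_derivative. apply Rabs_def1; lra. }
  assert (HD' : forall z, 0 < z < 1 -> is_derive D z 0).
  { intros z Hz.
    replace 0 with (/ 2 * (- (z / 2) ^ r' * (PI * tan (PI * (z / 2))))
                    - - (PI / 2) * (z / 2) ^ r' * tan (PI * z / 2))
      by (replace (PI * (z / 2)) with (PI * z / 2) by field; field).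
    apply (is_derive_minus (fun z => log_mcos (S r') (z / 2)) G); [|now apply HG'].
    apply (is_derive_comp (log_mcos (S r')) (fun z => z / 2)).
    - apply is_derive_Reals, log_mcos_derivative_tan. lra.
    - auto_derive; [exact I | field]. }
  assert (Dx : D x = D 0).
  { apply null_derivative_eq; [lra| |].
    - intros z Hz. apply is_derive_Reals, HD'. lra.
    - intros z Hz. apply continuity_pt_ex_derive, HD. lra. }
  assert (D0 : D 0 = 0).
  { unfold D. rewrite G0, Rdiv_0_l. unfold log_mcos. rewrite Series_null; [ring|].
    apply log_mcos_factor_0. }
  rewrite D0 in Dx. unfold D in Dx. lra.
Qed.

Lemma is_lim_seq_mcos_partial_half r' x c e E : 0 <= x < 1 ->
  log_mcos (S r') (x / 2) = e * ln c + E ->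
  is_lim_seq (mcos_partial (S r') (x / 2)) (Rpower c e * exp E).
Proof.
  intros Hx HL.
  replace (Rpower c e * exp E) with (exp (log_mcos (S r') (x / 2))).
  - apply is_lim_seq_mcos_partial. apply Rabs_def1; lra.
  - rewrite HL. unfold Rpower. rewrite <- exp_plus. f_equal; ring.
Qed.

Ltac discharge_series_derive Hz :=
  repeat match goal with
  | |- _ /\ _ => split
  | |- True => exact I
  | |- 0 < 2 * cos _ => apply Rmult_lt_0_compat; [lra | apply cos_gt_0; pose proof PI_RGT_0; nra]
  | |- ex_derive (fun _ => Ssin 2 _) ?w => exact (ex_intro _ _ (Ssin2_is_derive w Hz))
  | |- ex_derive (fun _ => Scos 3 _) ?w => exact (ex_intro _ _ (Scos3_is_derive w))
  | |- ex_derive (fun _ => Ssin 4 _) ?w => exact (ex_intro _ _ (Ssin4_is_derive w))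
  | |- ex_derive (fun _ => Scos 5 _) ?w => exact (ex_intro _ _ (Scos5_is_derive w))
  | |- context [Derive ?F ?w] =>
    lazymatch F with
    | (fun _ => Ssin 2 _) => rewrite (is_derive_unique F w _ (Ssin2_is_derive w Hz))
    | (fun _ => Scos 3 _) => rewrite (is_derive_unique F w _ (Scos3_is_derive w))
    | (fun _ => Ssin 4 _) => rewrite (is_derive_unique F w _ (Ssin4_is_derive w))
    | (fun _ => Scos 5 _) => rewrite (is_derive_unique F w _ (Scos5_is_derive w))
    end
  end.

(** The closed forms are checked by differentiation: their derivatives are
    [- (PI / 2) (z / 2)^(r-1) tan (PI z / 2)], as for [log_mcos r (z / 2)]. *)
Ltac solve_closed_form :=
  apply log_mcos_half_eq;
  [ intros z Hz; assert (Hz' : -1 < z < 1) by lra; auto_derive; discharge_series_derive Hz'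
  | intros z Hz; assert (Hz' : -1 < z < 1) by lra; auto_derive; discharge_series_derive Hz';
    pose proof PI_RGT_0;
    assert (0 < cos (PI * z / 2)) by (apply cos_gt_0; nra);
    unfold tan, Rdiv in *; field; lra
  | rewrite ?Ssin_0, ?Scos_0; field; pose proof PI_RGT_0; lra ].

Lemma log_mcos_2 : forall x, 0 <= x < 1 ->
  log_mcos 2 (x / 2) = x / 2 * ln (2 * cos (PI * x / 2)) + 1 / (2 * PI) * Ssin 2 x.
Proof. solve_closed_form. Qed.

Lemma log_mcos_3 : forall x, 0 <= x < 1 ->
  log_mcos 3 (x / 2) = (x / 2) ^ 2 * ln (2 * cos (PI * x / 2)) +
    (1 / (2 * PI ^ 2) * Scos 3 x + x / (2 * PI) * Ssin 2 x + 1 / (2 * PI ^ 2) * zetaE 3).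
Proof. solve_closed_form. Qed.

Lemma log_mcos_4 : forall x, 0 <= x < 1 ->
  log_mcos 4 (x / 2) = (x / 2) ^ 3 * ln (2 * cos (PI * x / 2)) +
    (3 * x / (4 * PI ^ 2) * Scos 3 x - 3 / (4 * PI ^ 3) * Ssin 4 x
     + 3 * x ^ 2 / (8 * PI) * Ssin 2 x).
Proof. solve_closed_form. Qed.

Lemma log_mcos_5 : forall x, 0 <= x < 1 ->
  log_mcos 5 (x / 2) = (x / 2) ^ 4 * ln (2 * cos (PI * x / 2)) +
    (- (3 / (2 * PI ^ 4)) * Scos 5 x + 3 * x ^ 2 / (4 * PI ^ 2) * Scos 3 x
     - 3 * x / (2 * PI ^ 3) * Ssin 4 x + x ^ 3 / (4 * PI) * Ssin 2 x
     - 3 / (2 * PI ^ 4) * zetaE 5).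
Proof. solve_closed_form. Qed.

Theorem corollary2p13 (x : R) (hx0 : 0 <= x) (hx1 : x < 1) :
  let c := 2 * cos (PI * x / 2) in
  is_lim_seq (mcos_partial 2 (x / 2))
    (Rpower c (x / 2) * exp (1 / (2 * PI) * Ssin 2 x)) /\
  is_lim_seq (mcos_partial 3 (x / 2))
    (Rpower c ((x / 2) ^ 2) *
     exp (1 / (2 * PI ^ 2) * Scos 3 x + x / (2 * PI) * Ssin 2 x
          + 1 / (2 * PI ^ 2) * zetaE 3)) /\
  is_lim_seq (mcos_partial 4 (x / 2))
    (Rpower c ((x / 2) ^ 3) *
     exp (3 * x / (4 * PI ^ 2) * Scos 3 x - 3 / (4 * PI ^ 3) * Ssin 4 x
          + 3 * x ^ 2 / (8 * PI) * Ssin 2 x)) /\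
  is_lim_seq (mcos_partial 5 (x / 2))
    (Rpower c ((x / 2) ^ 4) *
     exp (- (3 / (2 * PI ^ 4)) * Scos 5 x + 3 * x ^ 2 / (4 * PI ^ 2) * Scos 3 x
          - 3 * x / (2 * PI ^ 3) * Ssin 4 x + x ^ 3 / (4 * PI) * Ssin 2 x
          - 3 / (2 * PI ^ 4) * zetaE 5)).
Proof.
  intro c. assert (Hx : 0 <= x < 1) by lra.
  repeat split; apply is_lim_seq_mcos_partial_half; auto.
  - apply log_mcos_2, Hx.
  - apply log_mcos_3, Hx.
  - apply log_mcos_4, Hx.
  - apply log_mcos_5, Hx.
Qed.
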